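(* In the setting of the two-instance Bernoulli lower bound (instances $\mathcal P_1$: arms $\mathrm{Ber}(p_0),\mathrm{Ber}(p_0-\epsilon)$; $\mathcal P_2$: swapped; approx-oracle allocation $\tilde T_i^*=n\,\mathfrak c(q_i)^{1/\alpha}/(\mathfrak c(q_1)^{1/\alpha}+\mathfrak c(q_2)^{1/\alpha})$ with $q_i$ the parameter of arm $i$), take $p_0=3/4$ and $\epsilon=1/(4\sqrt n)$, and let $(\mathfrak c,\alpha)$ be any one of the following: (i) $\mathfrak c(p)=1-p^2-(1-p)^2$, $\alpha=1$ ($\ell_2^2$-distance); (ii) $\mathfrak c(p)=2\sqrt{p(1-p)}$, $\alpha=1/2$ ($\ell_1$-distance); (iii) $\mathfrak c(p)=\sqrt{1/p-1}+\sqrt{1/(1-p)-1}$, $\alpha=1/2$ (separation distance). Then there is an absolute constant $C>0$ such that for all $n\ge2$ and every adaptive allocation scheme with budget $n$, $$\max_{\mathcal P\in\{\mathcal P_1,\mathcal P_2\}}\ \max_{i\in\{1,2\}}\ \mathbb E_{\mathcal P}\big[|T_i-\tilde T_i^*|\big]\;\ge\;C\sqrt n .$$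
   Context: An adaptive allocation scheme with budget $n$ selects at each round $t=1,\dots,n$ one of two arms based on the past selections and observations; the selected arm yields an independent Bernoulli draw with its parameter. $T_i$ is the total number of pulls of arm $i$ ($T_1+T_2=n$), and $\mathbb E_{\mathcal P}$ is expectation under instance $\mathcal P$. *)

From Stdlib Require Import Reals Lra List.
Import ListNotations.
Open Scope R_scope.

(* A history is the chronological list of (selected arm, observation) pairs.
   Arm 1 is encoded by [true], arm 2 by [false]; an observation is a Bernoulli
   outcome (true = 1, false = 0). *)
Definition history := list (bool * bool).

Definition policy := history -> bool.

Fixpoint expect (pol : policy) (q1 q2 : R) (k : nat) (h : history)
    (f : history -> R) : R :=
  match k with
  | O => f h
  | S k' =>
      let a := pol h in
      let q := if a then q1 else q2 in
      q * expect pol q1 q2 k' (h ++ [(a, true)]) f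
      + (1 - q) * expect pol q1 q2 k' (h ++ [(a, false)]) f
  end.

Definition E_inst (pol : policy) (q1 q2 : R) (n : nat) (f : history -> R) : R :=
  expect pol q1 q2 n [] f.

Definition pulls (i : bool) (h : history) : R :=
  INR (length (filter (fun x => Bool.eqb (fst x) i) h)).

Definition oracle_alloc (c : R -> R) (alpha : R) (n : nat) (q1 q2 : R)
    (i : bool) : R :=
  INR n * Rpower (c (if i then q1 else q2)) (1 / alpha)
  / (Rpower (c q1) (1 / alpha) + Rpower (c q2) (1 / alpha)).

Definition dev (c : R -> R) (alpha : R) (pol : policy) (n : nat) (q1 q2 : R)
    (i : bool) : R :=
  E_inst pol q1 q2 n (fun h => Rabs (pulls i h - oracle_alloc c alpha n q1 q2 i)).

Definition c_l2 (p : R) : R := 1 - p ^ 2 - (1 - p) ^ 2.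
Definition c_l1 (p : R) : R := 2 * sqrt (p * (1 - p)).
Definition c_sep (p : R) : R := sqrt (1 / p - 1) + sqrt (1 / (1 - p) - 1).

Definition p0 : R := 3 / 4.
Definition eps (n : nat) : R := 1 / (4 * sqrt (INR n)).

(* The expected deviations of T_1 from two targets x and y under the two
   instances add up to at least |x - y| times the overlap sum_h min (P h, Q h)
   of the laws of the history, and the overlap is at least half the squared
   Bhattacharyya affinity.  The affinity factorizes along the history into
   one-step affinities of Bernoulli laws, each at least 1 - 3 eps^2 / 2, so it
   is at least (1 - 3 eps^2 / 2)^n >= 29/32 because n eps^2 = 1/16.  In each of
   the three cases c(q)^(1/alpha) is a constant multiple of q (1 - q) or of its
   inverse; moving q = 3/4 by eps changes q (1 - q) by a relative amount of at
   least eps/2, so the oracle allocations of arm 1 on the two instances differ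
   by at least n eps / 2 = sqrt n / 8. *)

From Stdlib Require Import Reals Lra Lia Psatz List.
Import ListNotations.
Open Scope R_scope.

Definition bern_affinity (q r : R) : R := sqrt (q * r) + sqrt ((1 - q) * (1 - r)).

Lemma bern_affinityC (q r : R) : bern_affinity q r = bern_affinity r q.
Proof. unfold bern_affinity; rewrite (Rmult_comm q), (Rmult_comm (1 - q)); reflexivity. Qed.

Lemma sqrt_ge_of_sqr_le (a b : R) : 0 <= a -> a * a <= b -> a <= sqrt b.
Proof.
  intros Ha Hab. rewrite <- (sqrt_square a) by exact Ha.
  apply sqrt_le_1_alt; exact Hab.
Qed.

Lemma bern_affinity_p0_ge (e : R) : 0 < e <= 1 / 4 ->
  1 - 3 / 2 * e ^ 2 <= bern_affinity p0 (p0 - e).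
Proof.
  intros He; unfold bern_affinity, p0.
  assert (3/4 - e/2 - e^2/2 <= sqrt (3/4 * (3/4 - e))) by (apply sqrt_ge_of_sqr_le; nra).
  assert (1/4 + e/2 - e^2 <= sqrt ((1 - 3/4) * (1 - (3/4 - e)))) by (apply sqrt_ge_of_sqr_le; nra).
  lra.
Qed.

Lemma pow_one_sub_ge (t : R) (n : nat) : 0 <= t <= 1 -> 1 - INR n * t <= (1 - t) ^ n.
Proof.
  intros Ht; induction n as [|n IH]; [simpl; lra|].
  rewrite S_INR; simpl. pose proof (pos_INR n). nra.
Qed.

Lemma Rmin_ge_sqrt_mul (s x y : R) : 0 <= x -> 0 <= y ->
  2 * s * sqrt (x * y) - s ^ 2 * (x + y) <= Rmin x y.
Proof.
  intros Hx Hy. rewrite sqrt_mult by lra.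
  rewrite <- (sqrt_sqrt x) at 2 3 by lra. rewrite <- (sqrt_sqrt y) at 2 3 by lra.
  pose proof (sqrt_pos x) as Hu; pose proof (sqrt_pos y) as Hv.
  set (u := sqrt x) in *; set (v := sqrt y) in *.
  (* for u <= v: u^2 - 2suv + s^2 u^2 + s^2 v^2 = (u - s v)^2 + (s u)^2 *)
  destruct (Rle_dec u v).
  - rewrite Rmin_left by nra.
    pose proof (pow2_ge_0 (u - s * v)); pose proof (pow2_ge_0 (s * u)); nra.
  - rewrite Rmin_right by nra.
    pose proof (pow2_ge_0 (v - s * u)); pose proof (pow2_ge_0 (s * v)); nra.
Qed.

Lemma Rmin_mul_le (x y f g D : R) : 0 <= x -> 0 <= y -> 0 <= f -> 0 <= g ->
  D <= f + g -> Rmin x y * D <= x * f + y * g.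
Proof.
  intros Hx Hy Hf Hg HfgD.
  pose proof (Rmin_l x y); pose proof (Rmin_r x y); pose proof (Rmin_glb x y 0 Hx Hy).
  nra.
Qed.

Lemma expect_const (pol : policy) (q1 q2 : R) (k : nat) :
  forall (h : history) (v : R), expect pol q1 q2 k h (fun _ => v) = v.
Proof. induction k as [|k IH]; intros h v; simpl; [|rewrite !IH]; ring. Qed.

Section JointSum.

Variables (pol : policy) (q1 q2 r1 r2 : R).

(* [joint_sum k h x y F] is the sum, over all continuations [h'] of [h] by [k]
   rounds, of [F h' (x * P(h'|h)) (y * Q(h'|h))], where P and Q are the laws
   of the scheme on the instances (q1, q2) and (r1, r2). *)
Fixpoint joint_sum (k : nat) (h : history) (x y : R)
    (F : history -> R -> R -> R) : R :=
  match k with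
  | O => F h x y
  | S k' =>
      let q := if pol h then q1 else q2 in
      let r := if pol h then r1 else r2 in
      joint_sum k' (h ++ [(pol h, true)]) (x * q) (y * r) F
      + joint_sum k' (h ++ [(pol h, false)]) (x * (1 - q)) (y * (1 - r)) F
  end.

Lemma joint_sum_expect_l (k : nat) : forall h x y f,
  joint_sum k h x y (fun h' x' _ => x' * f h') = x * expect pol q1 q2 k h f.
Proof. induction k as [|k IH]; intros; simpl; [|rewrite !IH]; ring. Qed.

Lemma joint_sum_expect_r (k : nat) : forall h x y f,
  joint_sum k h x y (fun h' _ y' => y' * f h') = y * expect pol r1 r2 k h f.
Proof. induction k as [|k IH]; intros; simpl; [|rewrite !IH]; ring. Qed.

Lemma joint_sum_add (k : nat) : forall h x y F G,
  joint_sum k h x y (fun h' x' y' => F h' x' y' + G h' x' y')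
  = joint_sum k h x y F + joint_sum k h x y G.
Proof. induction k as [|k IH]; intros; simpl; [|rewrite !IH]; ring. Qed.

Lemma joint_sum_scal (k : nat) : forall h x y c F,
  joint_sum k h x y (fun h' x' y' => c * F h' x' y') = c * joint_sum k h x y F.
Proof. induction k as [|k IH]; intros; simpl; [|rewrite !IH]; ring. Qed.

Hypotheses (Hq1 : 0 <= q1 <= 1) (Hq2 : 0 <= q2 <= 1)
           (Hr1 : 0 <= r1 <= 1) (Hr2 : 0 <= r2 <= 1).

Lemma joint_sum_le (F G : history -> R -> R -> R) :
  (forall h x y, 0 <= x -> 0 <= y -> F h x y <= G h x y) ->
  forall k h x y, 0 <= x -> 0 <= y -> joint_sum k h x y F <= joint_sum k h x y G.
Proof.
  intros HFG k; induction k as [|k IH]; intros h x y Hx Hy; simpl; [auto|].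
  destruct (pol h); apply Rplus_le_compat; apply IH; nra.
Qed.

Definition overlap (k : nat) : R := joint_sum k [] 1 1 (fun _ x y => Rmin x y).
Definition affinity (k : nat) : R := joint_sum k [] 1 1 (fun _ x y => sqrt (x * y)).

Lemma joint_sum_sqrt_ge_pow (rho : R) : 0 <= rho ->
  rho <= bern_affinity q1 r1 -> rho <= bern_affinity q2 r2 ->
  forall k h x y, 0 <= x -> 0 <= y ->
  rho ^ k * sqrt (x * y) <= joint_sum k h x y (fun _ x' y' => sqrt (x' * y')).
Proof.
  intros Hrho H1 H2 k; induction k as [|k IH]; intros h x y Hx Hy; simpl; [lra|].
  assert (Hsplit : forall a b, 0 <= a <= 1 -> 0 <= b <= 1 ->
    sqrt (x * a * (y * b)) + sqrt (x * (1 - a) * (y * (1 - b)))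
    = sqrt (x * y) * bern_affinity a b).
  { intros a b Ha Hb; unfold bern_affinity.
    rewrite Rmult_plus_distr_l, <- !sqrt_mult by nra. f_equal; f_equal; ring. }
  assert (Hxy := sqrt_pos (x * y)); assert (Hk := pow_le rho k Hrho).
  destruct (pol h).
  - pose proof (IH (h ++ [(true, true)]) (x * q1) (y * r1) ltac:(nra) ltac:(nra)).
    pose proof (IH (h ++ [(true, false)]) (x * (1 - q1)) (y * (1 - r1)) ltac:(nra) ltac:(nra)).
    pose proof (Hsplit q1 r1 Hq1 Hr1).
    pose proof (Rmult_le_compat_l (rho ^ k * sqrt (x * y)) _ _ ltac:(nra) H1). nra.
  - pose proof (IH (h ++ [(false, true)]) (x * q2) (y * r2) ltac:(nra) ltac:(nra)).
    pose proof (IH (h ++ [(false, false)]) (x * (1 - q2)) (y * (1 - r2)) ltac:(nra) ltac:(nra)).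
    pose proof (Hsplit q2 r2 Hq2 Hr2).
    pose proof (Rmult_le_compat_l (rho ^ k * sqrt (x * y)) _ _ ltac:(nra) H2). nra.
Qed.

Lemma affinity_ge_pow (rho : R) (k : nat) : 0 <= rho ->
  rho <= bern_affinity q1 r1 -> rho <= bern_affinity q2 r2 -> rho ^ k <= affinity k.
Proof.
  intros Hrho H1 H2.
  pose proof (joint_sum_sqrt_ge_pow rho Hrho H1 H2 k [] 1 1 ltac:(lra) ltac:(lra)).
  unfold affinity. rewrite Rmult_1_l, sqrt_1, Rmult_1_r in *. assumption.
Qed.

Lemma overlap_ge_affinity_sqr (k : nat) : affinity k ^ 2 / 2 <= overlap k.
Proof.
  set (s := affinity k / 2).
  pose proof (joint_sum_le
    (fun _ x y => 2 * s * sqrt (x * y) + - s ^ 2 * (x * 1) + - s ^ 2 * (y * 1))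
    (fun _ x y => Rmin x y)
    (fun _ x y Hx Hy => ltac:(pose proof (Rmin_ge_sqrt_mul s x y Hx Hy); lra))
    k [] 1 1 ltac:(lra) ltac:(lra)) as Hle.
  rewrite !joint_sum_add, !joint_sum_scal, joint_sum_expect_l, joint_sum_expect_r,
    !expect_const in Hle.
  fold (affinity k) (overlap k) in Hle.
  unfold s in *. lra.
Qed.

Lemma expect_add_ge_overlap (k : nat) (f g : history -> R) (D : R) :
  (forall h, 0 <= f h) -> (forall h, 0 <= g h) -> (forall h, D <= f h + g h) ->
  D * overlap k <= expect pol q1 q2 k [] f + expect pol r1 r2 k [] g.
Proof.
  intros Hf Hg Hfg.
  rewrite <- (Rmult_1_l (expect pol q1 q2 k [] f)), <- (Rmult_1_l (expect pol r1 r2 k [] g)).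
  rewrite <- (joint_sum_expect_l k [] 1 1), <- (joint_sum_expect_r k [] 1 1), <- joint_sum_add.
  unfold overlap. rewrite <- joint_sum_scal.
  apply joint_sum_le; [|lra|lra].
  intros h x y Hx Hy. rewrite Rmult_comm. apply Rmin_mul_le; auto.
Qed.

End JointSum.

Lemma pulls_dev_sum_ge (pol : policy) (n : nat) (e x y : R) :
  0 < e <= 1 / 4 -> INR n * e ^ 2 <= 1 / 16 ->
  Rabs (x - y) / 4 <=
  E_inst pol p0 (p0 - e) n (fun h => Rabs (pulls true h - x))
  + E_inst pol (p0 - e) p0 n (fun h => Rabs (pulls true h - y)).
Proof.
  intros He Hne.
  assert (Hp : 0 <= p0 <= 1) by (unfold p0; lra).
  assert (Hpe : 0 <= p0 - e <= 1) by (unfold p0; lra).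
  set (rho := 1 - 3 / 2 * e ^ 2).
  assert (Hrho : 0 <= rho <= 1) by (unfold rho; nra).
  assert (Haff : rho ^ n <= affinity pol p0 (p0 - e) (p0 - e) p0 n).
  { apply (affinity_ge_pow _ _ _ _ _ Hp Hpe Hpe Hp); [lra|apply bern_affinity_p0_ge; lra|].
    rewrite bern_affinityC. apply bern_affinity_p0_ge; lra. }
  assert (Hpow : 29 / 32 <= rho ^ n).
  { pose proof (pow_one_sub_ge (3 / 2 * e ^ 2) n ltac:(nra)). unfold rho. nra. }
  pose proof (overlap_ge_affinity_sqr pol p0 (p0 - e) (p0 - e) p0 Hp Hpe Hpe Hp n).
  assert (Htri : forall h, Rabs (x - y) <= Rabs (pulls true h - x) + Rabs (pulls true h - y)).
  { intros h. rewrite (Rabs_minus_sym (pulls true h) x).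
    replace (x - y) with ((x - pulls true h) + (pulls true h - y)) by ring.
    apply Rabs_triang. }
  pose proof (expect_add_ge_overlap pol p0 (p0 - e) (p0 - e) p0 Hp Hpe Hpe Hp n
    (fun h => Rabs (pulls true h - x)) (fun h => Rabs (pulls true h - y)) (Rabs (x - y))
    (fun h => Rabs_pos _) (fun h => Rabs_pos _) Htri).
  pose proof (Rabs_pos (x - y)).
  assert (1 / 4 <= overlap pol p0 (p0 - e) (p0 - e) p0 n) by nra.
  unfold E_inst. nra.
Qed.

Definition rel_gap (a b : R) : R := Rabs (a - b) / (a + b).

Lemma rel_gap_scal (k a b : R) : 0 < k -> 0 < a -> 0 < b ->
  rel_gap (k * a) (k * b) = rel_gap a b.
Proof.
  intros Hk Ha Hb; unfold rel_gap.
  rewrite <- Rmult_minus_distr_l, <- Rmult_plus_distr_l, Rabs_mult, (Rabs_pos_eq k) by lra.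
  field; lra.
Qed.

Lemma rel_gap_inv (a b : R) : 0 < a -> 0 < b -> rel_gap (/ a) (/ b) = rel_gap a b.
Proof.
  intros Ha Hb; unfold rel_gap.
  replace (/ a - / b) with ((b - a) * / (a * b)) by (field; lra).
  rewrite Rabs_mult, (Rabs_pos_eq (/ (a * b))), Rabs_minus_sym
    by (left; apply Rinv_0_lt_compat; nra).
  field; nra.
Qed.

Lemma rel_gap_ge (k a b : R) : 0 < a + b -> k * (a + b) <= Rabs (a - b) -> k <= rel_gap a b.
Proof.
  intros Hab Hk; unfold rel_gap.
  replace k with (k * (a + b) / (a + b)) by (field; lra).
  apply Rmult_le_compat_r; [left; apply Rinv_0_lt_compat|]; lra.
Qed.

Lemma rel_gap_variance_p0_ge (e : R) : 0 < e <= 1 / 4 ->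
  e / 2 <= rel_gap (p0 * (1 - p0)) ((p0 - e) * (1 - (p0 - e))).
Proof.
  intros He; unfold p0; apply rel_gap_ge; [nra|].
  rewrite Rabs_minus_sym, Rabs_pos_eq; nra.
Qed.

Lemma c_l2_eq (p : R) : c_l2 p = 2 * (p * (1 - p)).
Proof. unfold c_l2; ring. Qed.

Lemma c_l1_pos (p : R) : 0 < p < 1 -> 0 < c_l1 p.
Proof. intros Hp; unfold c_l1. pose proof (sqrt_lt_R0 (p * (1 - p)) ltac:(nra)). lra. Qed.

Lemma c_l1_sqr (p : R) : 0 <= p <= 1 -> c_l1 p ^ 2 = 4 * (p * (1 - p)).
Proof.
  intros Hp; unfold c_l1.
  rewrite Rpow_mult_distr, pow2_sqrt by nra. ring.
Qed.

Lemma one_div_sub_one_pos (p : R) : 0 < p < 1 -> 0 < 1 / p - 1.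
Proof.
  intros Hp. assert (1 < 1 / p); [|lra].
  apply Rmult_lt_reg_r with p; [lra|]. unfold Rdiv; rewrite Rmult_assoc, Rinv_l; lra.
Qed.

Lemma c_sep_pos (p : R) : 0 < p < 1 -> 0 < c_sep p.
Proof.
  intros Hp; unfold c_sep.
  pose proof (sqrt_lt_R0 _ (one_div_sub_one_pos p Hp)).
  pose proof (sqrt_lt_R0 _ (one_div_sub_one_pos (1 - p) ltac:(lra))). lra.
Qed.

Lemma c_sep_sqr (p : R) : 0 < p < 1 -> c_sep p ^ 2 = / (p * (1 - p)).
Proof.
  intros Hp; unfold c_sep.
  pose proof (one_div_sub_one_pos p Hp) as Ha.
  pose proof (one_div_sub_one_pos (1 - p) ltac:(lra)) as Hb.
  replace ((sqrt (1 / p - 1) + sqrt (1 / (1 - p) - 1)) ^ 2) with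
    (Rsqr (sqrt (1 / p - 1)) + Rsqr (sqrt (1 / (1 - p) - 1))
     + 2 * (sqrt (1 / p - 1) * sqrt (1 / (1 - p) - 1))) by (unfold Rsqr; ring).
  rewrite !Rsqr_sqrt, <- sqrt_mult by lra.
  replace ((1 / p - 1) * (1 / (1 - p) - 1)) with 1 by (field; lra).
  rewrite sqrt_1. field; lra.
Qed.

Lemma oracle_weight_rel_gap_ge (c : R -> R) (alpha e : R) :
  (c = c_l2 /\ alpha = 1) \/ (c = c_l1 /\ alpha = 1 / 2) \/
  (c = c_sep /\ alpha = 1 / 2) -> 0 < e <= 1 / 4 ->
  e / 2 <= rel_gap (Rpower (c p0) (1 / alpha)) (Rpower (c (p0 - e)) (1 / alpha)).
Proof.
  intros Hc He.
  assert (Hp : 0 < p0 < 1) by (unfold p0; lra).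
  assert (Hpe : 0 < p0 - e < 1) by (unfold p0; lra).
  assert (Hv := rel_gap_variance_p0_ge e He).
  assert (Htwo : 1 / (1 / 2) = INR 2) by (simpl; field).
  destruct Hc as [[-> ->] | [[-> ->] | [-> ->]]].
  - rewrite Rdiv_1_r, !Rpower_1, !c_l2_eq, rel_gap_scal by (rewrite ?c_l2_eq; nra).
    exact Hv.
  - rewrite Htwo, !Rpower_pow, !c_l1_sqr, rel_gap_scal by (try apply c_l1_pos; nra).
    exact Hv.
  - rewrite Htwo, !Rpower_pow, !c_sep_sqr, rel_gap_inv by (try apply c_sep_pos; nra).
    exact Hv.
Qed.

Lemma oracle_alloc_swap_gap (c : R -> R) (alpha : R) (n : nat) (q r : R) :
  Rabs (oracle_alloc c alpha n q r true - oracle_alloc c alpha n r q true)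
  = INR n * rel_gap (Rpower (c q) (1 / alpha)) (Rpower (c r) (1 / alpha)).
Proof.
  unfold oracle_alloc, rel_gap.
  set (A := Rpower (c q) (1 / alpha)); set (B := Rpower (c r) (1 / alpha)).
  assert (HA : 0 < A) by apply exp_pos. assert (HB : 0 < B) by apply exp_pos.
  replace (INR n * A / (A + B) - INR n * B / (B + A)) with (INR n * ((A - B) / (A + B)))
    by (field; lra).
  rewrite Rabs_mult, Rabs_pos_eq by apply pos_INR.
  unfold Rdiv; rewrite Rabs_mult, (Rabs_pos_eq (/ (A + B))) by (left; apply Rinv_0_lt_compat; lra).
  reflexivity.
Qed.

Lemma eps_bounds (n : nat) : (1 <= n)%nat -> 0 < eps n <= 1 / 4.
Proof.
  intros Hn; unfold eps.
  assert (1 <= sqrt (INR n)) by (rewrite <- sqrt_1; apply sqrt_le_1_alt, (le_INR 1); lia).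
  split; [apply Rdiv_lt_0_compat; lra|].
  unfold Rdiv; rewrite !Rmult_1_l. apply Rinv_le_contravar; lra.
Qed.

Lemma eps_mul (n : nat) : (1 <= n)%nat -> INR n * eps n = sqrt (INR n) / 4.
Proof.
  intros Hn; unfold eps.
  assert (0 < sqrt (INR n)) by (apply sqrt_lt_R0, (lt_INR 0); lia).
  rewrite <- (sqrt_sqrt (INR n)) at 1 by apply pos_INR. field; lra.
Qed.

Lemma eps_sqr_mul (n : nat) : (1 <= n)%nat -> INR n * eps n ^ 2 = 1 / 16.
Proof.
  intros Hn; unfold eps.
  assert (0 < sqrt (INR n)) by (apply sqrt_lt_R0, (lt_INR 0); lia).
  rewrite <- (pow2_sqrt (INR n)) at 1 by apply pos_INR. field; lra.
Qed.

Lemma Rmax4_ge_avg (a b c d : R) : (a + c) / 2 <= Rmax (Rmax a b) (Rmax c d).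
Proof.
  pose proof (Rmax_l a b); pose proof (Rmax_l c d).
  pose proof (Rmax_l (Rmax a b) (Rmax c d)); pose proof (Rmax_r (Rmax a b) (Rmax c d)).
  lra.
Qed.

Theorem mainTheorem8 (c : R -> R) (alpha : R) :
  (c = c_l2 /\ alpha = 1) \/ (c = c_l1 /\ alpha = 1 / 2) \/
  (c = c_sep /\ alpha = 1 / 2) ->
  exists C : R, C > 0 /\
    forall (n : nat) (pol : policy), (2 <= n)%nat ->
      Rmax
        (Rmax (dev c alpha pol n p0 (p0 - eps n) true)
              (dev c alpha pol n p0 (p0 - eps n) false))
        (Rmax (dev c alpha pol n (p0 - eps n) p0 true)
              (dev c alpha pol n (p0 - eps n) p0 false))
      >= C * sqrt (INR n).
Proof.
  intros Hc. exists (1 / 64); split; [lra|].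
  intros n pol Hn.
  assert (He := eps_bounds n ltac:(lia)); assert (Hne := eps_mul n ltac:(lia)).
  assert (Hne2 := eps_sqr_mul n ltac:(lia)).
  pose proof (oracle_weight_rel_gap_ge c alpha (eps n) Hc He) as Hgap.
  pose proof (oracle_alloc_swap_gap c alpha n p0 (p0 - eps n)) as Hswap.
  pose proof (pulls_dev_sum_ge pol n (eps n) (oracle_alloc c alpha n p0 (p0 - eps n) true)
                (oracle_alloc c alpha n (p0 - eps n) p0 true) He ltac:(lra)) as Hdev.
  pose proof (Rmax4_ge_avg (dev c alpha pol n p0 (p0 - eps n) true)
                (dev c alpha pol n p0 (p0 - eps n) false)
                (dev c alpha pol n (p0 - eps n) p0 true)
                (dev c alpha pol n (p0 - eps n) p0 false)).
  pose proof (Rmult_le_compat_l (INR n) _ _ (pos_INR n) Hgap).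
  unfold dev in *. lra.
Qed.
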